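(* There exists a rewb $\alpha$ such that $L(\alpha)\ne L(\beta)$ for every rewb $\beta$ without a captured reference.
   Context: Fix a finite alphabet $\Sigma$. For $k\ge1$, $[k]=\{1,\dots,k\}$, $B_k=\{[_i,\,]_i:i\in[k]\}$ fresh brackets; $g$ fixes letters of $\Sigma$ and erases brackets. Rewbs: $\mathrm{REWB}_k$ and $\mathrm{var}(\alpha)$ defined inductively: $a\in\Sigma\cup\{\varepsilon\}$ ($\mathrm{var}=\emptyset$); $\backslash i$, $i\in[k]$ ($\mathrm{var}=\{i\}$); $\alpha_0\alpha_1$, $\alpha_0+\alpha_1$ (union); $\alpha_0^\ast$; $(_j\alpha_0)_j$ for $j\in[k]\setminus\mathrm{var}(\alpha_0)$ (var gains $j$); labels may repeat. $\mathcal{R}_k(\alpha)$: the regular language over $\Sigma\uplus B_k\uplus[k]$ from reading $\alpha$ as a regular expression with $\backslash i$ as letter $i$ and $(_i\alpha_0)_i$ as $[_i\mathcal{R}_k(\alpha_0)]_i$. Dereferencing $\mathcal{D}_k$: repeatedly take the leftmost number $i$; if no $[_i$ lies to its left delete it; else take the nearest $[_i$ to its left; if no $]_i$ lies between them the result is undefined; else replace $i$ by $g(u)$, $u$ the string strictly between that $[_i$ and the first subsequent $]_i$; finally delete all brackets. $L(\alpha)=\mathcal{D}_k(\mathcal{R}_k(\alpha))$. A rewb is without a captured reference if no subexpression $\backslash i$ occurs inside a subexpression of the form $(_j\beta)_j$. *)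

From mathcomp Require Import all_boot.
Set Implicit Arguments. Unset Strict Implicit. Unset Printing Implicit Defensive.

Section Rewb.
Variable Sigma : finType.

(* Syntax of rewbs (labels are natural numbers; membership in REWB_k is [rewb_k]). *)
Inductive rewb : Type :=
| RChr of Sigma
| REps
| RRef of nat
| RCat of rewb & rewb
| RAlt of rewb & rewb
| RStar of rewb
| RCap of nat & rewb.

Fixpoint var (a : rewb) : seq nat :=
  match a with
  | RChr _ | REps => [::]
  | RRef i => [:: i]
  | RCat a0 a1 | RAlt a0 a1 => var a0 ++ var a1
  | RStar a0 => var a0
  | RCap j a0 => j :: var a0
  end.

Fixpoint rewb_k (k : nat) (a : rewb) : bool :=
  match a with
  | RChr _ | REps => true
  | RRef i => (1 <= i <= k)
  | RCat a0 a1 | RAlt a0 a1 => rewb_k k a0 && rewb_k k a1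
  | RStar a0 => rewb_k k a0
  | RCap j a0 => [&& 1 <= j <= k, j \notin var a0 & rewb_k k a0]
  end.

Inductive sym : Type :=
| SLet of Sigma
| SOpen of nat
| SClose of nat
| SNum of nat.

(* R(alpha): the regular language over the extended alphabet. *)
Inductive InR : rewb -> seq sym -> Prop :=
| InR_chr a : InR (RChr a) [:: SLet a]
| InR_eps : InR REps [::]
| InR_ref i : InR (RRef i) [:: SNum i]
| InR_cat a0 a1 u v : InR a0 u -> InR a1 v -> InR (RCat a0 a1) (u ++ v)
| InR_altl a0 a1 u : InR a0 u -> InR (RAlt a0 a1) u
| InR_altr a0 a1 u : InR a1 u -> InR (RAlt a0 a1) u
| InR_star0 a0 : InR (RStar a0) [::]
| InR_starS a0 u v : InR a0 u -> InR (RStar a0) v -> InR (RStar a0) (u ++ v)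
| InR_cap j a0 u : InR a0 u -> InR (RCap j a0) (SOpen j :: rcons u (SClose j)).

(* g: keep letters, erase brackets (and numbers; only applied where none occur). *)
Fixpoint gmap (s : seq sym) : seq Sigma :=
  match s with
  | [::] => [::]
  | SLet a :: s' => a :: gmap s'
  | _ :: s' => gmap s'
  end.

(* [find_open i r acc] with r = rev pre: the part of pre strictly after the
   nearest (rightmost) [_i, or None if there is no [_i in pre. *)
Fixpoint find_open (i : nat) (r acc : seq sym) : option (seq sym) :=
  match r with
  | [::] => None
  | SOpen j :: r' => if j == i then Some acc else find_open i r' (SOpen j :: acc)
  | x :: r' => find_open i r' (x :: acc)
  end.

Fixpoint upto_close (i : nat) (s : seq sym) : option (seq sym) :=
  match s with
  | [::] => None
  | SClose j :: s' => if j == i then Some [::]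
                      else omap (cons (SClose j)) (upto_close i s')
  | x :: s' => omap (cons x) (upto_close i s')
  end.

(* Dereferencing, processing numbers leftmost first; [pre] is the already
   processed prefix (no numbers left in it). *)
Fixpoint deref_aux (pre w : seq sym) : option (seq Sigma) :=
  match w with
  | [::] => Some (gmap pre)
  | SNum i :: w' =>
      match find_open i (rev pre) [::] with
      | None => deref_aux pre w'
      | Some after =>
          match upto_close i after with
          | None => None
          | Some u => deref_aux (pre ++ map SLet (gmap u)) w'
          end
      end
  | x :: w' => deref_aux (rcons pre x) w'
  end.

Definition deref (w : seq sym) : option (seq Sigma) := deref_aux [::] w.

(* L(alpha) = D(R(alpha)) (undefined results discarded) *)
Definition lang (a : rewb) (w : seq Sigma) : Prop :=
  exists v, InR a v /\ deref v = Some w.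

Fixpoint has_ref (a : rewb) : bool :=
  match a with
  | RChr _ | REps => false
  | RRef _ => true
  | RCat a0 a1 | RAlt a0 a1 => has_ref a0 || has_ref a1
  | RStar a0 => has_ref a0
  | RCap _ a0 => has_ref a0
  end.

Fixpoint no_captured_ref (a : rewb) : bool :=
  match a with
  | RChr _ | REps | RRef _ => true
  | RCat a0 a1 | RAlt a0 a1 => no_captured_ref a0 && no_captured_ref a1
  | RStar a0 => no_captured_ref a0
  | RCap _ a0 => ~~ has_ref a0
  end.

End Rewb.

From mathcomp Require Import all_boot zify.
Set Implicit Arguments. Unset Strict Implicit. Unset Printing Implicit Defensive.

(* The rewb alpha = (_1 a)_1 ((_2 \1\1)_2 (_1 \2\2)_1)^* of REWB_2 is not equivalent
   to any rewb beta without a captured reference.  Each iteration of the star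
   quadruples the content of capture 1, so the lengths of the words of L(alpha)
   are exactly the numbers 2 4^m - 1: they are unbounded, yet contain no
   arithmetic progression with positive difference.

   For beta, the captures contain only reference-free expressions, so
   dereferencing can be followed on a derivation tree t: [out_len t e] is the
   length of the output when e records the lengths currently captured under
   each label, and [deref_yield] shows that it is the length of the
   dereferenced word.  The growth dichotomy ([growth]) then says, by induction
   on beta, that every derivation either outputs at most B (1 + sum of e)
   letters, or beta has derivations whose output lengths form an arithmetic
   progression (a star iteration that can be pumped, possibly inside a capture
   or a concatenation).  From the empty environment, a long word of L(alpha)
   would thus give such a progression inside L(beta) = L(alpha), which is
   impossible. *)

Section NoCapturedReference.
Variable S : finType.

Definition is_open i (x : sym S) : bool := if x is SOpen j then j == i else false.
Definition is_close i (x : sym S) : bool := if x is SClose j then j == i else false.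
Definition is_num (x : sym S) : bool := if x is SNum _ then true else false.

(* [last_open i s] is the part of [s] strictly after its last [_i, if any:
   this is what dereferencing inspects on meeting the number i after [s]. *)
Definition last_open i (s : seq (sym S)) := find_open i (rev s) [::].

Lemma find_open_acc i (r acc : seq (sym S)) :
  find_open i r acc = omap (cat^~ acc) (find_open i r [::]).
Proof.
elim: r acc => [|x r IH] acc //=.
have IHx y : find_open i r (y :: acc) = omap (cat^~ acc) (find_open i r [:: y]).
  by rewrite IH [in RHS]IH; case: (find_open i r [::]) => //= a; rewrite -catA.
by case: x => [a|j|j|j] /=; rewrite ?IHx //; case: eqP.
Qed.

Lemma find_open_cat i (r1 r2 acc : seq (sym S)) :
  find_open i (r1 ++ r2) acc =
  if find_open i r1 acc is Some a then Some a else find_open i r2 (rev r1 ++ acc).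
Proof.
elim: r1 acc => [|y r1 IH] acc //=.
by case: y => [a|j|j|j] /=; rewrite ?IH ?rev_cons ?cat_rcons //; case: (j == i).
Qed.

Lemma last_open_cat i (s1 s2 : seq (sym S)) :
  last_open i (s1 ++ s2) =
  if last_open i s2 is Some a then Some a else omap (cat^~ s2) (last_open i s1).
Proof.
rewrite /last_open rev_cat find_open_cat.
by case: (find_open i (rev s2) [::]) => //; rewrite revK cats0 find_open_acc.
Qed.

Lemma last_open_none i (s : seq (sym S)) : ~~ has (is_open i) s -> last_open i s = None.
Proof.
rewrite -has_rev /last_open; elim: (rev s) [::] => [|x r IH] acc //=.
case: x => [a|j|j|j] /=; rewrite ?negb_or; try exact: IH.
by case/andP => /negbTE -> /IH.
Qed.

Lemma last_open_last i (pre t : seq (sym S)) :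
  ~~ has (is_open i) t -> last_open i (pre ++ SOpen S i :: t) = Some t.
Proof.
move=> no_open; rewrite -cat_rcons -cats1 last_open_cat last_open_none //.
by rewrite last_open_cat /last_open /= eqxx.
Qed.

Lemma upto_close_first i (s t : seq (sym S)) :
  ~~ has (is_close i) s -> upto_close i (s ++ SClose S i :: t) = Some s.
Proof.
elim: s => [|x s IH] /=; first by rewrite eqxx.
by case: x => [a|j|j|j] /=; rewrite ?negb_or => //; try (case/andP => /negbTE ->);
  move=> /IH ->.
Qed.

Lemma upto_close_catr i (s t u : seq (sym S)) :
  upto_close i s = Some u -> upto_close i (s ++ t) = Some u.
Proof.
elim: s u => [|x s IH] u //=.
have step y : omap (cons y) (upto_close i s) = Some u ->
              omap (cons y) (upto_close i (s ++ t)) = Some u.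
  by case E: (upto_close i s) => [v|] //=; rewrite (IH v).
by case: x => [a|j|j|j] /=; try case: eqP; auto.
Qed.

Lemma gmap_cat (s1 s2 : seq (sym S)) : gmap (s1 ++ s2) = gmap s1 ++ gmap s2.
Proof. by elim: s1 => [|x s IH] //=; case: x => [a|j|j|j] /=; rewrite IH. Qed.

Lemma gmap_let (w : seq S) : gmap (map (@SLet S) w) = w.
Proof. by elim: w => //= a w ->. Qed.

Lemma has_let (p : pred (sym S)) (w : seq S) :
  (forall a, ~~ p (SLet a)) -> ~~ has p (map (@SLet S) w).
Proof. by move=> notp; elim: w => //= a w IH; rewrite negb_or notp IH. Qed.

Lemma deref_num i (pre w a u : seq (sym S)) :
  last_open i pre = Some a -> upto_close i a = Some u ->
  deref_aux pre (SNum S i :: w) = deref_aux (pre ++ map (@SLet S) (gmap u)) w.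
Proof. by rewrite /last_open /= => -> ->. Qed.

Lemma deref_no_num (pre u w : seq (sym S)) :
  ~~ has is_num u -> deref_aux pre (u ++ w) = deref_aux (pre ++ u) w.
Proof.
elim: u pre => [|x u IH] pre /=; first by rewrite cats0.
by case: x => [a|j|j|j] //= h; rewrite IH // cat_rcons.
Qed.

Lemma deref_sym (pre rest : seq (sym S)) x :
  ~~ is_num x -> deref_aux pre (x :: rest) = deref_aux (rcons pre x) rest.
Proof. by case: x. Qed.

Lemma deref_captured i (pre post rest : seq (sym S)) (w : seq S) :
  ~~ has (is_open i) post ->
  deref_aux (pre ++ SOpen S i :: map (@SLet S) w ++ SClose S i :: post) (SNum S i :: rest) =
  deref_aux (pre ++ SOpen S i :: map (@SLet S) w ++ SClose S i :: post ++ map (@SLet S) w) rest.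
Proof.
move=> no_open.
have no_open' : ~~ has (is_open i) (map (@SLet S) w ++ SClose S i :: post).
  by rewrite has_cat negb_or has_let //= no_open.
have closed : upto_close i (map (@SLet S) w ++ SClose S i :: post) = Some (map (@SLet S) w).
  by apply: upto_close_first; apply: has_let.
by rewrite (deref_num _ (last_open_last pre no_open') closed) gmap_let -!catA /= -catA.
Qed.

(* Derivation trees for R(beta).  An alternative leaves no trace in the tree and
   a star is unfolded into concatenations, so a tree records only letters,
   references, concatenation and captures. *)
Inductive dtree : Type :=
| TLet of S | TEps | TRef of nat | TCat of dtree & dtree | TCap of nat & dtree.

Fixpoint yield (t : dtree) : seq (sym S) :=
  match t with
  | TLet a => [:: SLet a]
  | TEps => [::]
  | TRef i => [:: SNum S i]
  | TCat t u => yield t ++ yield u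
  | TCap j t => SOpen S j :: rcons (yield t) (SClose S j)
  end.

Inductive derives : rewb S -> dtree -> Prop :=
| der_chr a : derives (RChr a) (TLet a)
| der_eps : derives (REps S) TEps
| der_ref i : derives (RRef S i) (TRef i)
| der_cat a b t u : derives a t -> derives b u -> derives (RCat a b) (TCat t u)
| der_altl a b t : derives a t -> derives (RAlt a b) t
| der_altr a b t : derives b t -> derives (RAlt a b) t
| der_star0 a : derives (RStar a) TEps
| der_starS a t u : derives a t -> derives (RStar a) u -> derives (RStar a) (TCat t u)
| der_cap j a t : derives a t -> derives (RCap j a) (TCap j t).

Lemma derives_InR (b : rewb S) t : derives b t -> InR b (yield t).
Proof. by elim=> /=; constructor. Qed.

Lemma InR_derives (b : rewb S) v : InR b v -> exists2 t, derives b t & yield t = v.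
Proof.
elim=> [a||i|a1 a2 u w _ [t Dt <-] _ [t' Dt' <-]|a1 a2 u _ [t Dt <-]|a1 a2 u _ [t Dt <-]
       |a1|a1 u w _ [t Dt <-] _ [t' Dt' <-]|j a1 u _ [t Dt <-]].
- by exists (TLet a); first constructor.
- by exists TEps; first constructor.
- by exists (TRef i); first constructor.
- by exists (TCat t t'); first constructor.
- by exists t; first exact: der_altl.
- by exists t; first exact: der_altr.
- by exists TEps; first constructor.
- by exists (TCat t t'); first constructor.
- by exists (TCap j t); first constructor.
Qed.

(* Lengths of words of R(beta) once dereferenced, computed on derivation trees:
   [nletters t] counts the letters, [last_cap t i] is the length of the content
   of the last capture labelled i, [env_after t e] updates the record [e] of
   captured lengths, and [out_len t e] is the length of the output when the
   references are resolved from [e] and the captures of [t] itself. *)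
Fixpoint nletters (t : dtree) : nat :=
  match t with
  | TLet _ => 1
  | TCat t u => nletters t + nletters u
  | TCap _ t => nletters t
  | _ => 0
  end.

Fixpoint last_cap (t : dtree) (i : nat) : option nat :=
  match t with
  | TCat t u => if last_cap u i is Some c then Some c else last_cap t i
  | TCap j t => if i == j then Some (nletters t) else last_cap t i
  | _ => None
  end.

Definition env_after (t : dtree) (e : nat -> nat) (i : nat) : nat :=
  odflt (e i) (last_cap t i).

Fixpoint out_len (t : dtree) (e : nat -> nat) : nat :=
  match t with
  | TLet _ => 1
  | TRef i => e i
  | TCat t u => out_len t e + out_len u (env_after t e)
  | TCap _ t => out_len t e
  | TEps => 0
  end.

Lemma env_after_cat (t u : dtree) e i :
  env_after (TCat t u) e i = env_after u (env_after t e) i.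
Proof. by rewrite /env_after /=; case: (last_cap u i). Qed.

Lemma nletters_yield (t : dtree) : size (gmap (yield t)) = nletters t.
Proof.
elim: t => //= [t IH u IH'|j t IH]; first by rewrite gmap_cat size_cat IH IH'.
by rewrite -cats1 gmap_cat cats0 IH.
Qed.

Lemma last_cap_le (t : dtree) i c : last_cap t i = Some c -> c <= nletters t.
Proof.
elim: t c => //= [t IH u IH'|j t IH] c.
  case E: (last_cap u i) => [c'|] => [[<-]|/IH]; last by move/leq_trans; apply; exact: leq_addr.
  by apply: leq_trans (IH' _ E) (leq_addl _ _).
by case: eqP => [_ [<-] //|_ /IH].
Qed.

Lemma derives_bracket (b : rewb S) t j :
  derives b t -> has (is_open j) (yield t) || has (is_close j) (yield t) -> j \in var b.
Proof.
elim=> //= [a c t1 u _ IH1 _ IH2|a c t1 _ IH|a c t1 _ IH|a t1 u _ IH1 _ IH2|i a t1 _ IH].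
- by rewrite !has_cat mem_cat orbACA => /orP [/IH1|/IH2] ->; rewrite ?orbT.
- by rewrite mem_cat => /IH ->.
- by rewrite mem_cat => /IH ->; rewrite orbT.
- by rewrite !has_cat orbACA => /orP [/IH1|/IH2].
- rewrite in_cons -cats1 !has_cat /= !orbF eq_sym.
  by case/orP => [/orP [-> //|h]|/orP [h| -> //]]; rewrite IH ?h ?orbT.
Qed.

Lemma last_cap_var (b : rewb S) t j c :
  derives b t -> last_cap t j = Some c -> j \in var b.
Proof.
move=> Dt; elim: Dt c => //= [a d t1 u _ IH1 _ IH2|a d t1 _ IH|a d t1 _ IH|a t1 u _ IH1 _ IH2
                            |i a t1 _ IH] c.
- by rewrite mem_cat; case E: (last_cap u j) => [c'|] => [_|/IH1 ->]; rewrite ?(IH2 _ E) ?orbT.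
- by rewrite mem_cat => /IH ->.
- by rewrite mem_cat => /IH ->; rewrite orbT.
- by case E: (last_cap u j) => [c'|] => [_|/IH1 //]; exact: IH2 E.
- by rewrite in_cons; case: eqP => [-> //|_ /IH ->]; rewrite orbT.
Qed.

Lemma no_captured_pure (b : rewb S) : has_ref b = false -> no_captured_ref b.
Proof.
elim: b => //= [b1 IH1 b2 IH2|b1 IH1 b2 IH2|j b _ -> //].
all: by move=> /norP [/negbTE /IH1 -> /negbTE /IH2 ->].
Qed.

Lemma pure_out_len (b : rewb S) t e :
  derives b t -> has_ref b = false -> out_len t e = nletters t /\ ~~ has is_num (yield t).
Proof.
move=> Dt; elim: Dt e => //= [a c t1 u _ IH1 _ IH2|a c t1 _ IH|a c t1 _ IH|a t1 u _ IH1 _ IH2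
                            |i a t1 _ IH] e.
- case/norP => /negbTE /(IH1 e) [-> n1] /negbTE /(IH2 (env_after t1 e)) [-> n2].
  by rewrite has_cat negb_or n1 n2.
- by case/norP => /negbTE /IH.
- by case/norP => _ /negbTE /IH.
- move=> pure; case: (IH1 e pure) => -> n1; case: (IH2 (env_after t1 e) pure) => -> n2.
  by rewrite has_cat negb_or n1 n2.
- by move=> /(IH e) [-> h]; rewrite -cats1 has_cat /= orbF.
Qed.

(* [records X e e']: appending [X] to a prefix whose captured lengths are
   recorded by [e] yields a prefix whose captured lengths are recorded by [e'].
   [records pre env0 e] says that [e] records the captures of [pre] itself. *)
Definition records (X : seq (sym S)) (e e' : nat -> nat) :=
  forall i, (last_open i X = None /\ e' i = e i) \/
    exists a u, [/\ last_open i X = Some a, upto_close i a = Some u & size (gmap u) = e' i].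

Definition env0 : nat -> nat := fun _ => 0.

Lemma records_cat (X1 X2 : seq (sym S)) e e1 e2 e3 :
  records X1 e e1 -> records X2 e1 e2 -> (forall i, e3 i = e2 i) -> records (X1 ++ X2) e e3.
Proof.
move=> R1 R2 E i; rewrite last_open_cat E.
case: (R2 i) => [[-> ->]|[a [u [-> h1 h2]]]]; last by right; exists a, u.
case: (R1 i) => [[-> ->]|[a [u [-> h1 h2]]]]; first by left.
by right; exists (a ++ X2), u; split=> //; exact: upto_close_catr.
Qed.

Lemma records_no_open (X : seq (sym S)) e : (forall i, ~~ has (is_open i) X) -> records X e e.
Proof. by move=> h i; left; rewrite last_open_none. Qed.

Lemma records_pure k (b : rewb S) t :
  derives b t -> rewb_k k b -> has_ref b = false -> forall e, records (yield t) e (env_after t e).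
Proof.
elim=> /= [a _ _ e|_ _ e|//|a c t1 u _ IH1 _ IH2|a c t1 _ IH|a c t1 _ IH|a _ _ e
          |a t1 u _ IH1 _ IH2|j a t1 Dt IH].
- exact: records_no_open.
- exact: records_no_open.
- case/andP => k1 k2 /norP [/negbTE h1 /negbTE h2] e.
  exact: records_cat (IH1 k1 h1 e) (IH2 k2 h2 _) (env_after_cat _ _ e).
- by case/andP => k1 _ /norP [/negbTE h1 _]; apply: IH.
- by case/andP => _ k1 /norP [_ /negbTE h1]; apply: IH.
- exact: records_no_open.
- move=> k1 h1 e.
  exact: records_cat (IH1 k1 h1 e) (IH2 k1 h1 _) (env_after_cat _ _ e).
- case/and3P => _ nj k1 h1 e i.
  have nO : ~~ has (is_open j) (yield t1).
    by apply: contra nj => h; apply: (derives_bracket Dt); rewrite h.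
  have nC : ~~ has (is_close j) (yield t1).
    by apply: contra nj => h; apply: (derives_bracket Dt); rewrite h orbT.
  have [->|nij] := eqVneq i j.
    right; exists (rcons (yield t1) (SClose S j)), (yield t1).
    rewrite -(cat0s (SOpen S j :: _)) last_open_last; last first.
      by rewrite -cats1 has_cat /= orbF.
    by rewrite -cats1 upto_close_first // nletters_yield /env_after /= eqxx.
  have -> : last_open i (SOpen S j :: rcons (yield t1) (SClose S j)) =
            omap (cat^~ [:: SClose S j]) (last_open i (yield t1)).
    rewrite -cats1 -cat1s catA last_open_cat last_open_cat.
    by case: (last_open i (yield t1)) => //; rewrite /last_open /= eq_sym (negbTE nij).
  have -> : env_after (TCap j t1) e i = env_after t1 e i by rewrite /env_after /= (negbTE nij).
  case: (IH k1 h1 e i) => [[-> ->]|[a1 [u [-> h2 h3]]]]; first by left.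
  by right; exists (a1 ++ [:: SClose S j]), u; split=> //; exact: upto_close_catr.
Qed.

Lemma deref_yield k (b : rewb S) t :
  derives b t -> rewb_k k b -> no_captured_ref b ->
  forall pre e rest, records pre env0 e ->
  exists X, [/\ deref_aux pre (yield t ++ rest) = deref_aux (pre ++ X) rest,
                size (gmap X) = out_len t e & records X e (env_after t e)].
Proof.
elim=> /= [a|||a c t1 u _ IH1 _ IH2|a c t1 _ IH|a c t1 _ IH|a|a t1 u _ IH1 _ IH2|j a t1 Dt _].
- move=> _ _ pre e rest _; exists [:: SLet a]; rewrite cats1.
  by split=> //; exact: records_no_open.
- by move=> _ _ pre e rest _; exists [::]; rewrite cats0; split=> // i; left.
- move=> i _ _ pre e rest /(_ i) [[h1 h2]|[a [u [h1 h2 h3]]]].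
    exists [::]; move: h1; rewrite /last_open cats0 => ->.
    by split=> // j; left.
  exists (map (@SLet S) (gmap u)); move: h1 h2; rewrite /last_open gmap_let => -> ->.
  by split=> //; apply: records_no_open => j; apply: has_let.
- case/andP => k1 k2 /andP [n1 n2] pre e rest Rpre.
  have [X1 [E1 S1 R1]] := IH1 k1 n1 _ _ (yield u ++ rest) Rpre.
  have [X2 [E2 S2 R2]] := IH2 k2 n2 _ _ rest (records_cat Rpre R1 (fun _ => erefl)).
  exists (X1 ++ X2); rewrite -catA E1 E2 catA gmap_cat size_cat S1 S2.
  by split=> //; exact: records_cat R1 R2 (env_after_cat _ _ e).
- by case/andP => k1 _ /andP [n1 _]; exact: IH.
- by case/andP => _ k1 /andP [_ n1]; exact: IH.
- by move=> _ _ pre e rest _; exists [::]; rewrite cats0; split=> // i; left.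
- move=> k1 n1 pre e rest Rpre.
  have [X1 [E1 S1 R1]] := IH1 k1 n1 _ _ (yield u ++ rest) Rpre.
  have [X2 [E2 S2 R2]] := IH2 k1 n1 _ _ rest (records_cat Rpre R1 (fun _ => erefl)).
  exists (X1 ++ X2); rewrite -catA E1 E2 catA gmap_cat size_cat S1 S2.
  by split=> //; exact: records_cat R1 R2 (env_after_cat _ _ e).
- move=> kk /negbTE pure pre e rest _.
  have [O N] := pure_out_len e Dt pure.
  exists (SOpen S j :: rcons (yield t1) (SClose S j)); split.
  + by rewrite deref_no_num ?cat_rcons // -cats1 has_cat /= orbF.
  + by rewrite (nletters_yield (TCap j t1)) O.
  + exact: (records_pure (der_cap j Dt) kk pure e).
Qed.

Lemma deref_derivation k (b : rewb S) t :
  derives b t -> rewb_k k b -> no_captured_ref b ->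
  exists2 w, deref (yield t) = Some w & size w = out_len t env0.
Proof.
move=> Dt kb nb; have R0 : records [::] env0 env0 by exact: records_no_open.
have [X [E Sz _]] := @deref_yield k b t Dt kb nb [::] env0 [::] R0.
by exists (gmap X); rewrite // /deref -[yield t]cats0 E.
Qed.

Lemma lang_out_len k (b : rewb S) w :
  rewb_k k b -> no_captured_ref b -> lang b w ->
  exists2 t, derives b t & size w = out_len t env0.
Proof.
move=> kb nb [v [/InR_derives [t Dt <-] Hd]]; exists t => //.
by have [w' D' <-] := deref_derivation Dt kb nb; move: Hd; rewrite D' => [[->]].
Qed.

Lemma out_len_lang k (b : rewb S) t :
  rewb_k k b -> no_captured_ref b -> derives b t ->
  exists2 w, lang b w & size w = out_len t env0.
Proof.
move=> kb nb Dt; have [w D size_w] := deref_derivation Dt kb nb.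
by exists w => //; exists (yield t); split; first exact: derives_InR.
Qed.

Lemma out_len_ext (t : dtree) e e' : (forall i, e i = e' i) -> out_len t e = out_len t e'.
Proof.
have env_ext (u : dtree) x y : (forall i, x i = y i) -> forall i, env_after u x i = env_after u y i.
  by move=> h i; rewrite /env_after h.
elim: t e e' => [a||i|t IH u IH'|j t IH] e e' h /=; [by []|by []|exact: h| |exact: IH].
by rewrite (IH e e' h) (IH' _ (env_after t e')) //; exact: env_ext.
Qed.

Lemma out_len_mono (t : dtree) e e' : (forall i, e i <= e' i) -> out_len t e <= out_len t e'.
Proof.
elim: t e e' => [a||i|t IH u IH'|j t IH] e e' h /=; [by []|by []|exact: h| |exact: IH].
apply: leq_add; first exact: IH.
by apply: IH' => i; rewrite /env_after; case: (last_cap t i) => /=.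
Qed.

Lemma nletters_out_len (t : dtree) e : nletters t <= out_len t e.
Proof. by elim: t e => [a||i|t IH u IH'|j t IH] e //=; exact: leq_add. Qed.

Definition affine (A E : nat -> nat) (m : nat) : nat -> nat := fun i => A i + m * E i.

(* [mask_caps t E] drops the dependence on m of the labels that [t] recaptures. *)
Definition mask_caps (t : dtree) (E : nat -> nat) (i : nat) : nat :=
  if last_cap t i is Some _ then 0 else E i.

Lemma env_after_affine (t : dtree) A E m i :
  env_after t (affine A E m) i = affine (env_after t A) (mask_caps t E) m i.
Proof.
by rewrite /env_after /affine /mask_caps; case: (last_cap t i) => //= c; rewrite muln0 addn0.
Qed.

Lemma out_len_affine (t : dtree) A E : exists c D, forall m, out_len t (affine A E m) = c + m * D.
Proof.
elim: t A E => [a||i|t IH u IH'|j t IH] A E /=.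
- by exists 1, 0 => m; rewrite muln0.
- by exists 0, 0 => m; rewrite muln0.
- by exists (A i), (E i).
- have [c [D h]] := IH A E; have [c' [D' h']] := IH' (env_after t A) (mask_caps t E).
  exists (c + c'), (D + D') => m.
  by rewrite h (out_len_ext _ (env_after_affine t A E m)) h' mulnDr addnACA.
- exact: IH.
Qed.

Definition progression (b : rewb S) (x : nat -> nat) :=
  exists n0 D A E, 0 < D /\ forall m, exists t,
    [/\ derives b t, out_len t x = n0 + m * D & forall i, env_after t x i = affine A E m i].

Lemma prog_sub (a c : rewb S) x :
  (forall t, derives a t -> derives c t) -> progression a x -> progression c x.
Proof.
move=> Dac [n0 [D [A [E [D0 F]]]]]; exists n0, D, A, E; split=> // m.
by have [t [Dt O Et]] := F m; exists t; split=> //; exact: Dac.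
Qed.

Lemma prog_append (a c : rewb S) x u :
  (forall t, derives a t -> derives c (TCat t u)) -> progression a x -> progression c x.
Proof.
move=> Dac [n0 [D [A [E [D0 F]]]]].
have [c0 [D2 h]] := out_len_affine u A E.
exists (n0 + c0), (D + D2), (env_after u A), (mask_caps u E); split; first by rewrite addn_gt0 D0.
move=> m; have [t [Dt O Et]] := F m; exists (TCat t u); split; first exact: Dac.
  by rewrite /= O (out_len_ext _ Et) h mulnDr addnACA.
move=> i; rewrite env_after_cat -env_after_affine /env_after.
by case: (last_cap u i) => //=; rewrite -Et.
Qed.

Lemma prog_prepend (b c : rewb S) x t :
  (forall u, derives b u -> derives c (TCat t u)) -> progression b (env_after t x) ->
  progression c x.
Proof.
move=> Dbc [n0 [D [A [E [D0 F]]]]].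
exists (out_len t x + n0), D, A, E; split=> // m.
have [u [Du O Eu]] := F m; exists (TCat t u); split; first exact: Dbc.
  by rewrite /= O addnA.
by move=> i; rewrite env_after_cat Eu.
Qed.

(* Capturing a reference-free progression: the new captured length of label j
   is the (affine) output length itself. *)
Lemma prog_cap j (a : rewb S) x : has_ref a = false -> progression a x -> progression (RCap j a) x.
Proof.
move=> pure [n0 [D [A [E [D0 F]]]]].
exists n0, D, (fun i => if i == j then n0 else A i), (fun i => if i == j then D else E i).
split=> // m; have [t [Dt O Et]] := F m; exists (TCap j t); split; first exact: der_cap.
  by [].
move=> i; rewrite /env_after /affine /=; case: eqP => [_|_]; last exact: Et.
by have [<- _] := pure_out_len x Dt pure; rewrite O.
Qed.

Lemma env_after_idem (t : dtree) x i : env_after t (env_after t x) i = env_after t x i.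
Proof. by rewrite /env_after; case: (last_cap t i). Qed.

(* Pumping a star: if an iteration [d] still produces output when it is repeated
   right after itself, repeating it m more times yields a progression. *)
Lemma prog_star_pump (r : rewb S) x d s :
  derives r d -> derives (RStar r) s -> 0 < out_len d (env_after d x) ->
  progression (RStar r) x.
Proof.
move=> Dd Ds D0; set y := env_after d x.
have dy i : env_after d y i = y i by exact: env_after_idem.
have iterate m : [/\ derives (RStar r) (iter m (TCat d) s),
   out_len (iter m (TCat d) s) y = m * out_len d y + out_len s y
   & forall i, env_after (iter m (TCat d) s) y i = env_after s y i].
  elim: m => [|m [IH1 IH2 IH3]] //=; split; first exact: der_starS.
    by rewrite (out_len_ext _ dy) IH2 mulSn addnA.
  by move=> i; rewrite env_after_cat -IH3 {1}/env_after dy.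
exists (out_len d x + out_len s y), (out_len d y), (env_after s y), (fun=> 0); split=> // m.
have [D1 O1 E1] := iterate m; exists (TCat d (iter m (TCat d) s)); split.
- exact: der_starS.
- by rewrite /= -/y O1; lia.
- by move=> i; rewrite env_after_cat E1 /affine muln0 addn0.
Qed.

Definition env_sum K (e : nat -> nat) := \sum_(i < K) e i.
Definition env_support K (e : nat -> nat) := \sum_(i < K) (0 < e i).

Lemma env_sum_ge K (e : nat -> nat) i : i < K -> e i <= env_sum K e.
Proof. by move=> lt_iK; rewrite /env_sum (bigD1 (Ordinal lt_iK)) //= leq_addr. Qed.

Lemma env_sum_mono K (x y : nat -> nat) : (forall i, x i <= y i) -> env_sum K x <= env_sum K y.
Proof. by move=> h; apply: leq_sum => i _; exact: h. Qed.

Lemma env_support_mono K (x y : nat -> nat) :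
  (forall i, x i <= y i) -> env_support K x <= env_support K y.
Proof.
by move=> h; apply: leq_sum => i _; have := h i; case: (x i) => //= n; case: (y i).
Qed.

Lemma env_support_le K (x : nat -> nat) : env_support K x <= K.
Proof.
rewrite -[leqRHS]card_ord -sum1_card; apply: leq_sum => i _; exact: leq_b1.
Qed.

Lemma env_support_lt K (x y : nat -> nat) i0 :
  (forall i, y i <= x i) -> i0 < K -> y i0 = 0 -> 0 < x i0 -> env_support K y < env_support K x.
Proof.
move=> le_yx lt_i0K y0 x0; rewrite /env_support (bigD1 (Ordinal lt_i0K)) //=.
rewrite [X in _ < X](bigD1 (Ordinal lt_i0K)) //= y0 x0 add1n ltnS.
by apply: leq_sum => i _; have := le_yx i; case: (y i) => //= n; case: (x i).
Qed.

Lemma env_sum_after K (t : dtree) e : env_sum K (env_after t e) <= env_sum K e + K * nletters t.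
Proof.
apply: leq_trans (_ : _ <= \sum_(i < K) (e i + nletters t)) _.
  apply: leq_sum => i _; rewrite /env_after; case E: (last_cap t i) => [c|] /=.
    by apply: leq_trans (last_cap_le E) (leq_addl _ _).
  exact: leq_addr.
by rewrite big_split /= sum_nat_const card_ord.
Qed.

Lemma var_bound k (b : rewb S) i : rewb_k k b -> i \in var b -> 0 < i <= k.
Proof.
elim: b => //= [j|b1 IH1 b2 IH2|b1 IH1 b2 IH2|j b IH].
- by rewrite inE => h /eqP ->.
- by case/andP => h1 h2; rewrite mem_cat => /orP [/(IH1 h1)|/(IH2 h2)].
- by case/andP => h1 h2; rewrite mem_cat => /orP [/(IH1 h1)|/(IH2 h2)].
- by case/and3P => h1 _ h2; rewrite inE => /orP [/eqP ->|/(IH h2)].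
Qed.

(* A star iteration that produces nothing when repeated contains no letters;
   so its captures can only erase lengths, and if it produces output at all it
   must have erased a nonzero captured length. *)
Lemma silent_iteration k (r : rewb S) d x :
  rewb_k k r -> derives r d -> out_len d (env_after d x) = 0 ->
  (forall i, env_after d x i <= x i) /\
  (0 < out_len d x -> env_support k.+1 (env_after d x) < env_support k.+1 x).
Proof.
move=> kr Dd silent.
have no_letters : nletters d = 0 by apply/eqP; rewrite -leqn0 -silent nletters_out_len.
have empty_cap i c : last_cap d i = Some c -> c = 0.
  by move/last_cap_le; rewrite no_letters leqn0 => /eqP.
have erased i c : last_cap d i = Some c -> env_after d x i = 0.
  by move=> E; rewrite /env_after E; exact: empty_cap E.
have le_env i : env_after d x i <= x i.
  by rewrite /env_after; case E: (last_cap d i) => [c|] //=; rewrite (empty_cap i c).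
split=> // out_pos.
case: (boolP [exists i : 'I_k.+1, (last_cap d i != None) && (0 < x i)]).
  case/existsP => i /andP [capd x_pos].
  case E: (last_cap d i) capd => [c|] //= _.
  exact: env_support_lt le_env (ltn_ord i) (erased _ _ E) x_pos.
rewrite negb_exists => /forallP unerased.
have ge_env i : x i <= env_after d x i.
  rewrite /env_after; case E: (last_cap d i) => [c|] //=.
  have /andP [_ le_ik] := var_bound kr (last_cap_var Dd E).
  by have := unerased (Ordinal (le_ik : i < k.+1)); rewrite /= E /=; case: (x i).
by move: (out_len_mono d ge_env); rewrite silent leqn0 => /eqP out0; rewrite out0 in out_pos.
Qed.

Definition dichotomy K (b : rewb S) B :=
  forall t, derives b t -> forall e, out_len t e <= B * (1 + env_sum K e) \/ progression b e.

(* The dichotomy is preserved by each construction of rewbs without captured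
   reference; for a concatenation, the environment after the left part grows
   by at most K times its output. *)
Lemma dichotomy_cat K (b1 b2 : rewb S) B1 B2 :
  dichotomy K b1 B1 -> dichotomy K b2 B2 -> dichotomy K (RCat b1 b2) (B1 + B2 + B2 * K * B1).
Proof.
move=> H1 H2 t Dt e.
have [t1 [t2 [-> D1 D2]]] : exists t1 t2, [/\ t = TCat t1 t2, derives b1 t1 & derives b2 t2].
  by inversion Dt; subst; exists t0, u.
have [h1|P] := H1 t1 D1 e.
  2: by right; apply: prog_append P => u1 Du1; exact: der_cat Du1 D2.
have [h2|P] := H2 t2 D2 (env_after t1 e).
  2: by right; apply: prog_prepend P => u2 Du2; exact: der_cat D1 Du2.
left; have h3 : env_sum K (env_after t1 e) <= env_sum K e + K * (B1 * (1 + env_sum K e)).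
  apply: leq_trans (env_sum_after K t1 e) _; rewrite leq_add2l leq_mul2l.
  by rewrite (leq_trans (nletters_out_len t1 e) h1) orbT.
move: h1 h2 h3 => /=; move: (env_sum K e) (env_sum K _) (out_len t1 e) (out_len t2 _).
by move=> s s' o1 o2 h1 h2 h3; nia.
Qed.

Lemma dichotomy_alt K (b1 b2 : rewb S) B1 B2 :
  dichotomy K b1 B1 -> dichotomy K b2 B2 -> dichotomy K (RAlt b1 b2) (B1 + B2).
Proof.
move=> H1 H2 t Dt e.
have sub1 u : derives b1 u -> derives (RAlt b1 b2) u by exact: der_altl.
have sub2 u : derives b2 u -> derives (RAlt b1 b2) u by exact: der_altr.
set s := 1 + env_sum K e.
have le1 : B1 * s <= (B1 + B2) * s by rewrite leq_mul2r leq_addr orbT.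
have le2 : B2 * s <= (B1 + B2) * s by rewrite leq_mul2r leq_addl orbT.
inversion Dt as [| | | |? ? ? D1|? ? ? D2| | |]; subst.
  by have [h|P] := H1 t D1 e; [left; exact: leq_trans le1 | right; exact: prog_sub sub1 P].
by have [h|P] := H2 t D2 e; [left; exact: leq_trans le2 | right; exact: prog_sub sub2 P].
Qed.

(* Each unfolding of a star either yields a progression or outputs a bounded
   amount; and among the bounded iterations, those producing output each erase
   a captured length, so there are at most [env_support] of them. *)
Lemma star_bound k (r : rewb S) Br :
  rewb_k k r -> dichotomy k.+1 r Br ->
  forall s, derives (RStar r) s -> forall x,
    progression (RStar r) x \/ out_len s x <= Br * (1 + env_sum k.+1 x) * env_support k.+1 x.
Proof.
move=> kr Hr; elim=> [a||i|d _ s' IH|j t _] Ds x; try by inversion Ds.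
  by right.
have [Dd Ds'] : derives r d /\ derives (RStar r) s' by inversion Ds.
have [Bd|P] := Hr d Dd x; last by left; apply: prog_append P => t Dt; exact: der_starS Dt Ds'.
have [silent|loud] := posnP (out_len d (env_after d x)); last first.
  by left; exact: prog_star_pump Dd Ds' loud.
have [le_env lt_supp] := silent_iteration kr Dd silent.
have [P|Bs] := IH Ds' (env_after d x).
  by left; apply: prog_prepend P => u Du; exact: der_starS Dd Du.
right => /=; set B := Br * (1 + env_sum k.+1 x).
have Bs' : out_len s' (env_after d x) <= B * env_support k.+1 (env_after d x).
  by apply: leq_trans Bs _; rewrite leq_mul2r leq_mul2l leq_add2l env_sum_mono ?orbT.
have [out0|out_pos] := posnP (out_len d x).
  by rewrite out0 add0n; apply: leq_trans Bs' _; rewrite leq_mul2l env_support_mono ?orbT.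
apply: leq_trans (leq_add Bd Bs') _; rewrite -mulnS leq_mul2l.
by rewrite (lt_supp out_pos) orbT.
Qed.

Lemma dichotomy_star k (r : rewb S) Br :
  rewb_k k r -> dichotomy k.+1 r Br -> dichotomy k.+1 (RStar r) (Br * k.+1).
Proof.
move=> kr Hr s Ds e; have [P|h] := star_bound kr Hr Ds e; first by right.
by left; apply: leq_trans h _; rewrite mulnAC leq_mul2r leq_mul2l env_support_le !orbT.
Qed.

Lemma dichotomy_cap K j (a : rewb S) B :
  has_ref a = false -> dichotomy K a B -> dichotomy K (RCap j a) B.
Proof.
move=> pure Ha t Dt e.
have [t1 [-> D1]] : exists t1, t = TCap j t1 /\ derives a t1 by inversion Dt; subst; exists t0.
by have [h|P] := Ha t1 D1 e; [left | right; exact: prog_cap].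
Qed.

Lemma growth k (b : rewb S) :
  rewb_k k b -> no_captured_ref b -> exists B, dichotomy k.+1 b B.
Proof.
elim: b => [a|||b1 IH1 b2 IH2|b1 IH1 b2 IH2|r IH|j a IH] /=.
- by exists 1 => t Dt e; inversion Dt; subst; left; rewrite mul1n.
- by exists 0 => t Dt e; inversion Dt; subst; left.
- move=> i /andP [_ le_ik] _; exists 1 => t Dt e; inversion Dt; subst; left => /=.
  by rewrite mul1n (leq_trans (@env_sum_ge k.+1 e i _)) ?leq_addl ?ltnS.
- case/andP => k1 k2 /andP [n1 n2].
  by have [B1 H1] := IH1 k1 n1; have [B2 H2] := IH2 k2 n2; eexists; exact: dichotomy_cat H1 H2.
- case/andP => k1 k2 /andP [n1 n2].
  by have [B1 H1] := IH1 k1 n1; have [B2 H2] := IH2 k2 n2; eexists; exact: dichotomy_alt H1 H2.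
- by move=> kr nr; have [Br Hr] := IH kr nr; eexists; exact: dichotomy_star kr Hr.
- case/and3P => _ _ ka /negbTE pure.
  by have [Ba Ha] := IH ka (no_captured_pure pure); exists Ba; exact: dichotomy_cap pure Ha.
Qed.

Definition body : rewb S :=
  RCat (RCap 2 (RCat (RRef S 1) (RRef S 1))) (RCap 1 (RCat (RRef S 2) (RRef S 2))).

Definition alpha (a0 : S) : rewb S := RCat (RCap 1 (RChr a0)) (RStar body).

Definition body_word : seq (sym S) :=
  [:: SOpen S 2; SNum S 1; SNum S 1; SClose S 2; SOpen S 1; SNum S 2; SNum S 2; SClose S 1].

Definition alpha_word (a0 : S) (m : nat) : seq (sym S) :=
  [:: SOpen S 1; SLet a0; SClose S 1] ++ flatten (nseq m body_word).

(* From here on, dereferencing steps are taken only through the lemmas above. *)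
Local Arguments deref_aux : simpl never.

Lemma deref_body (pre rest : seq (sym S)) (w : seq S) :
  deref_aux (pre ++ SOpen S 1 :: map (@SLet S) w ++ [:: SClose S 1]) (body_word ++ rest) =
  deref_aux (pre ++ SOpen S 1 :: map (@SLet S) w ++ SClose S 1 ::
             SOpen S 2 :: map (@SLet S) (w ++ w) ++ SClose S 2 ::
             SOpen S 1 :: map (@SLet S) ((w ++ w) ++ (w ++ w)) ++ [:: SClose S 1]) rest.
Proof.
set L := map (@SLet S) w.
rewrite /body_word cat_cons deref_sym // rcons_cat rcons_cons rcons_cat /=.
rewrite deref_captured // deref_captured; last by rewrite /= has_let.
rewrite deref_sym // deref_sym //.
set P1 := pre ++ SOpen S 1 :: L ++ [:: SClose S 1].
have -> : rcons (rcons (pre ++ SOpen S 1 :: map (@SLet S) w ++ SClose S 1 ::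
                        ([:: SOpen S 2] ++ map (@SLet S) w) ++ map (@SLet S) w) (SClose S 2))
                 (SOpen S 1) =
          P1 ++ SOpen S 2 :: map (@SLet S) (w ++ w) ++ SClose S 2 :: [:: SOpen S 1].
  by rewrite /P1 -!cats1 map_cat; do 3 rewrite -?catA /=.
rewrite deref_captured // deref_captured; last by rewrite /= has_let.
rewrite deref_sym //; congr deref_aux.
by rewrite /P1 /L -!cats1 !map_cat; do 4 rewrite -?catA /=.
Qed.

Lemma deref_iter m (pre : seq (sym S)) (w : seq S) :
  exists2 w', deref_aux (pre ++ SOpen S 1 :: map (@SLet S) w ++ [:: SClose S 1])
                        (flatten (nseq m body_word)) = Some w'
           & size w' + size w = size (gmap pre) + 2 * size w * 4 ^ m.
Proof.
elim: m pre w => [|m IH] pre w.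
  exists (gmap (pre ++ SOpen S 1 :: map (@SLet S) w ++ [:: SClose S 1])) => //.
  by rewrite gmap_cat /= gmap_cat gmap_let /= cats0 size_cat expn0 muln1 -addnA addnn mul2n.
have -> : flatten (nseq m.+1 body_word) = body_word ++ flatten (nseq m body_word) by [].
rewrite deref_body.
set pre' := pre ++ SOpen S 1 :: map (@SLet S) w ++ SClose S 1 ::
            SOpen S 2 :: map (@SLet S) (w ++ w) ++ [:: SClose S 2].
have [w' E size_w'] := IH pre' ((w ++ w) ++ (w ++ w)).
exists w'; first by rewrite -E /pre'; congr deref_aux; do 3 rewrite -?catA /=.
move: size_w'; rewrite /pre'; do 3 rewrite ?(gmap_cat, gmap_let) /=.
rewrite !size_cat /= expnS.
by move: (4 ^ m) => q; nia.
Qed.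

Lemma deref_alpha_word (a0 : S) m :
  exists2 w, deref (alpha_word a0 m) = Some w & size w + 1 = 2 * 4 ^ m.
Proof.
have [w E size_w] := deref_iter m [::] [:: a0].
by exists w; [rewrite /deref deref_no_num | rewrite size_w /= muln1].
Qed.

Lemma InR_body v : InR body v <-> v = body_word.
Proof.
split=> [|->]; last first.
  exact: InR_cat (InR_cap 2 (InR_cat (InR_ref S 1) (InR_ref S 1)))
                 (InR_cap 1 (InR_cat (InR_ref S 2) (InR_ref S 2))).
by rewrite /body => H; repeat match goal with H : InR _ _ |- _ => inversion H; subst; clear H end.
Qed.

Lemma InR_star_body v : InR (RStar body) v -> exists m, v = flatten (nseq m body_word).
Proof.
move E: (RStar body) => b H; elim: H E => // [a1 _|a1 u v' Hu _ _ IH E]; first by exists 0.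
case: E => Ea; subst a1; have [m ->] := IH erefl.
by exists m.+1; move/InR_body: Hu => ->.
Qed.

Lemma InR_alpha (a0 : S) v : InR (alpha a0) v <-> exists m, v = alpha_word a0 m.
Proof.
split.
  rewrite /alpha => Hv; inversion Hv as [| | | ? ? u1 u2 Hcap Hstar| | | | |]; subst.
  have -> : u1 = [:: SOpen S 1; SLet a0; SClose S 1].
    by inversion Hcap as [| | | | | | | |? ? u Hchr]; subst; inversion Hchr.
  by have [m ->] := InR_star_body Hstar; exists m.
case=> m ->; rewrite /alpha /alpha_word; apply: InR_cat.
  exact (InR_cap 1 (InR_chr a0)).
elim: m => [|m IH]; first exact: (@InR_star0 S body).
exact: InR_starS (proj2 (InR_body _) erefl) IH.
Qed.

Lemma lang_alpha_size (a0 : S) w : lang (alpha a0) w -> exists m, size w + 1 = 2 * 4 ^ m.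
Proof.
case=> v [/InR_alpha [m ->] D]; have [w' D' size_w'] := deref_alpha_word a0 m.
by exists m; move: D; rewrite D' => [[<-]].
Qed.

Lemma lang_alpha_long (a0 : S) B : exists2 w, lang (alpha a0) w & B < size w.
Proof.
have [w D size_w] := deref_alpha_word a0 B; exists w.
  by exists (alpha_word a0 B); split=> //; apply/InR_alpha; exists B.
have := ltn_expl B (isT : 1 < 4); lia.
Qed.

End NoCapturedReference.

Lemma powers_no_progression n0 D a b :
  0 < D -> n0 + D + 1 = 2 * 4 ^ a -> n0 + 2 * D + 1 = 2 * 4 ^ b -> False.
Proof.
move=> D_pos Ea Eb; have [lt_ab|le_ba] := ltnP a b.
  have : 4 ^ a.+1 <= 4 ^ b by rewrite leq_pexp2l.
  by rewrite expnS; move: (4 ^ a) (4 ^ b) Ea Eb => p q Ea Eb; nia.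
have : 4 ^ b <= 4 ^ a by rewrite leq_pexp2l.
by move: (4 ^ a) (4 ^ b) Ea Eb => p q Ea Eb; nia.
Qed.

Theorem corollary3 (Sigma : finType) (a0 : Sigma) :
  exists (k : nat) (alpha : rewb Sigma),
    1 <= k /\ rewb_k k alpha /\
    forall (k' : nat) (beta : rewb Sigma),
      1 <= k' -> rewb_k k' beta -> no_captured_ref beta ->
      ~ (forall w : seq Sigma, lang alpha w <-> lang beta w).
Proof.
exists 2, (alpha a0); split=> //; split=> // k' beta _ kb nb same_lang.
have [B HB] := growth kb nb.
have alpha_length m : (exists w, lang beta w /\ size w = m) -> exists a, m + 1 = 2 * 4 ^ a.
  by case=> w [/same_lang /lang_alpha_size [a Ea] <-]; exists a.
have [w /same_lang Lw long_w] := lang_alpha_long a0 B.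
have [t Dt size_w] := lang_out_len kb nb Lw.
case: (HB t Dt env0) => [bounded|[n0 [D [A [E [D_pos F]]]]]].
  move: bounded; rewrite /env_sum big1 // addn0 muln1 -size_w => le_wB.
  by move: (leq_ltn_trans le_wB long_w); rewrite ltnn.
have progression_length m : exists a, n0 + m * D + 1 = 2 * 4 ^ a.
  have [tm [Dm O _]] := F m; apply: alpha_length; rewrite -O.
  by have [wm Lm size_wm] := out_len_lang kb nb Dm; exists wm.
have [a Ea] := progression_length 1; have [b Eb] := progression_length 2.
by apply: (powers_no_progression D_pos); [rewrite -[D]mul1n; exact: Ea | exact: Eb].
Qed.
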